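(* Let $k=-\frac{n}{2}(n-2)$. The map $\varphi\colon\Sigma^{2pk}E_*\to E_*\langle\det\rangle$ defined by $\varphi(x)=x\delta^k$ is an isomorphism of $F$--equivariant $E_*$--modules.
   Context: Let $p$ be an odd prime and $n=p-1$. Let $E=E_n$ be Morava $E$--theory with $E_*=\mathbb{W}[\![u_1,\dots,u_{n-1}]\!][u^{\pm1}]$, $\mathbb{W}=W(\mathbb{F}_{p^n})$, associated to the Honda formal group law of height $n$, with its action of the Morava stabilizer group $\mathbb{G}_n=\mathbb{S}_n\rtimes\mathrm{Gal}(\mathbb{F}_{p^n}/\mathbb{F}_p)$ ($\mathbb{S}_n$ the automorphism group of the Honda formal group law over $\mathbb{F}_{p^n}$). Let $\det\colon\mathbb{G}_n\to\mathbb{Z}_p^\times$ be the determinant (reduced norm) homomorphism. $E_*\langle\det\rangle$ denotes $E_*$ with the twisted action $\widehat{g}(x)=g(x)\det(g)$. Let $\omega\in\mathbb{W}$ be a primitive $(p^n-1)$--st root of unity; identifying $\mathbb{W}^\times$ with a subgroup of $\mathbb{S}_n$, let $\tau=\omega^{(p^n-1)/n^2}\in\mathbb{S}_n$, and write $\eta=\omega^{(p^n-1)/n^2}$ when viewed as an element of $\mathbb{W}\subseteq E_0$; then $\det(\tau)=\eta^{(p^n-1)/n}$. $F=\langle\zeta,\tau\rangle\cong C_p\rtimes C_{n^2}$ is a maximal finite subgroup of $\mathbb{S}_n$ with $\zeta$ of order $p$, $\tau^{-1}\zeta\tau=\zeta^e$ for $e$ a generator of $(\mathbb{Z}/p)^\times$,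 and $\det(\zeta)=1$. The element $\delta\in E_{2p}$ is the unit, invariant under $C_p=\langle\zeta\rangle$, appearing in the Hopkins--Miller computation $\widehat{H}^*(C_p,E_* )\cong\mathbb{F}_{p^n}[a,b^{\pm1},\delta^{\pm1}]/(a^2)$; it satisfies $\tau(\delta)=\eta^{-p}\delta$. *)

From HB Require Import structures.
From mathcomp Require Export all_boot all_order all_algebra all_fingroup.
Set Implicit Arguments.
Unset Strict Implicit.
Unset Printing Implicit Defensive.
Import GRing.Theory.
Local Open Scope ring_scope.

Definition mor_n (p : nat) : nat := p.-1.

(* k = - (n/2) (n-2)   (n is even since p is odd) *)
Definition mor_k (p : nat) : int := - ((mor_n p %/ 2 * (mor_n p - 2))%N)%:Z.

Definition mor_eta (E : nzRingType) (p : nat) (omega : E) : E :=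
  omega ^+ ((p ^ mor_n p - 1) %/ (mor_n p ^ 2))%N.

(* E_* is modelled as the commutative ring E = (+)_m E_m with homogeneous
   components [hom m] (m : int). *)
Record graded_comring (E : comUnitRingType) (hom : int -> {pred E}) : Prop := {
  hom0 : forall m, (0 : E) \in hom m;
  homD : forall m (x y : E), x \in hom m -> y \in hom m -> x + y \in hom m;
  homN : forall m (x : E), x \in hom m -> - x \in hom m;
  hom1 : (1 : E) \in hom 0;
  homM : forall m m' (x y : E), x \in hom m -> y \in hom m' -> x * y \in hom (m + m')
}.

Record graded_action (gT : finGroupType) (F : {set gT}) (E : comUnitRingType)
    (hom : int -> {pred E}) (act : gT -> {rmorphism E -> E}) : Prop := {
  act1 : forall x, act 1%g x = x;
  actM : forall g h x, g \in F -> h \in F -> act (g * h)%g x = act g (act h x);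
  act_hom : forall g m x, g \in F -> x \in hom m -> act g x \in hom m
}.

(* The twisted action of E_*<det> : g^(x) = g(x) det(g). *)
Definition twisted_act (gT : finGroupType) (E : comUnitRingType)
    (act : gT -> {rmorphism E -> E}) (detE : gT -> E) (g : gT) (x : E) : E :=
  act g x * detE g.

Definition phi_delta (E : comUnitRingType) (delta : E) (k : int) (x : E) : E :=
  x * delta ^ k.

(* Multiplication by the unit delta^k is E_*-linear, bijective and shifts
   degrees by 2pk, so only F-equivariance needs an argument: it says that
   delta^k is fixed by the twisted action g |-> det(g) g.  The fixed elements
   form a subgroup, so it suffices to check zeta and tau.  Zeta fixes delta and
   has determinant 1; tau multiplies delta^k by eta^(pN), where N = -k, so the
   condition becomes eta^(pN + (p^n-1)/n) = 1.  Since eta is a primitive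
   n^2-th root of unity, this is the divisibility n^2 | pN + (p^n-1)/n, which
   follows from expanding p^n = (1+n)^n modulo n^3. *)

From mathcomp Require Import zify.
Set Implicit Arguments.
Unset Strict Implicit.
Unset Printing Implicit Defensive.
Import GRing.Theory.

Lemma exp1Dn_expansion a j :
  exists r, ((1 + a) ^ j = 1 + j * a + 'C(j, 2) * a ^ 2 + a ^ 3 * r)%N.
Proof.
elim: j => [|j [r IHj]]; first by exists 0%N; rewrite bin0n; lia.
exists ('C(j, 2) + r + a * r)%N.
rewrite expnS IHj binS bin1 !expnS expn0; nia.
Qed.

Lemma expSn_sub1_expansion n :
  exists r, (n.+1 ^ n - 1 = n ^ 2 * (1 + 'C(n, 2) + n * r))%N.
Proof.
have [r Er] := exp1Dn_expansion n n.
by exists r; rewrite -add1n Er; nia.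
Qed.

Lemma sqr_dvdn_expSn_sub1 n : (n ^ 2 %| n.+1 ^ n - 1)%N.
Proof. by have [r ->] := expSn_sub1_expansion n; apply: dvdn_mulr. Qed.

Lemma sqr_dvdn_tau_exponent n : ~~ odd n ->
  (n ^ 2 %| n.+1 * (n %/ 2 * (n - 2)) + (n.+1 ^ n - 1) %/ n)%N.
Proof.
move=> n_even; have [r ->] := expSn_sub1_expansion n.
have [m ->] : exists m, n = m.*2.
  by exists n./2; rewrite -[LHS]odd_double_half (negPf n_even).
case: m => [|m]; first by rewrite !mul0n.
have half_n : (m.+1.*2 %/ 2 = m.+1)%N by rewrite divn2 doubleK.
have binom_n : 'C(m.+1.*2, 2) = (m.+1 * m.*2.+1)%N by rewrite bin2 -doubleMl doubleK.
rewrite -mulnn -mulnA mulKn // half_n binom_n.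
(* The sum is [n ^ 2 * (n - 1 + r)]. *)
apply/dvdnP; exists (m.*2.+1 + r)%N; nia.
Qed.

Lemma succ_mor_n p : prime p -> p = (mor_n p).+1.
Proof. by move=> p_prime; rewrite /mor_n prednK ?prime_gt0. Qed.

Lemma mor_n_even p : prime p -> odd p -> ~~ odd (mor_n p).
Proof. by move=> p_prime; rewrite {1}(succ_mor_n p_prime) /= => /negPf->. Qed.

Lemma mor_n_sqr_dvdn_tau_exponent p : prime p -> odd p ->
  (mor_n p ^ 2 %| p * (mor_n p %/ 2 * (mor_n p - 2)) + (p ^ mor_n p - 1) %/ mor_n p)%N.
Proof.
move=> p_prime p_odd; have := sqr_dvdn_tau_exponent (mor_n_even p_prime p_odd).
by rewrite -succ_mor_n.
Qed.

Local Open Scope ring_scope.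

Lemma mor_eta_prim_root (R : nzRingType) p (omega : R) : prime p ->
  (p ^ mor_n p - 1)%N.-primitive_root omega ->
  (mor_n p ^ 2)%N.-primitive_root (mor_eta p omega).
Proof.
move=> p_prime omega_prim; apply: (dvdn_prim_root omega_prim).
by rewrite {2}(succ_mor_n p_prime) sqr_dvdn_expSn_sub1.
Qed.

Section GradedRing.

Variables (E : comUnitRingType) (hom : int -> {pred E}).
Hypothesis E_graded : graded_comring hom.

Lemma hom_exprn x a j : x \in hom a -> x ^+ j \in hom (a * j%:Z).
Proof.
move=> x_a; elim: j => [|j IHj]; first by rewrite mulr0 hom1.
by rewrite exprS -addn1 PoszD mulrDr mulr1 addrC (homM E_graded).
Qed.

Lemma hom_exprz x a k : x \in hom a -> x^-1 \in hom (- a) -> x ^ k \in hom (a * k).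
Proof.
move=> x_a xV_a; case: k => j; first exact: hom_exprn.
by rewrite NegzE mulrN -mulNr -exprz_inv; apply: hom_exprn.
Qed.

Lemma phi_delta_hom delta a k m x :
    delta \in hom a -> delta^-1 \in hom (- a) ->
  x \in hom (m - a * k) -> phi_delta delta k x \in hom m.
Proof.
move=> delta_a deltaV_a x_m.
by rewrite -[m](subrK (a * k)) (homM E_graded) ?hom_exprz.
Qed.

Lemma phi_delta_hom_surj delta a k m y :
    delta \is a GRing.unit -> delta \in hom a -> delta^-1 \in hom (- a) ->
  y \in hom m -> exists2 x, x \in hom (m - a * k) & phi_delta delta k x = y.
Proof.
move=> delta_unit delta_a deltaV_a y_m; exists (phi_delta delta (- k) y).
  by apply: (phi_delta_hom delta_a deltaV_a); rewrite mulrN opprK subrK.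
by rewrite /phi_delta -mulrA -exprzDr // addNr mulr1.
Qed.

End GradedRing.

Lemma phi_delta_bij (E : comUnitRingType) (delta : E) k :
  delta \is a GRing.unit -> bijective (phi_delta delta k).
Proof.
move=> delta_unit; exists (phi_delta delta (- k)) => x;
  by rewrite /phi_delta -mulrA -exprzDr // ?addNr ?subrr mulr1.
Qed.

Lemma rmorph_exprz_eigen (R : comUnitRingType) (f : {rmorphism R -> R}) (x c : R) k :
  x \is a GRing.unit -> c \is a GRing.unit -> f x = c * x -> f (x ^ k) = c ^ k * x ^ k.
Proof.
move=> x_unit c_unit fx; rewrite rmorphXz // fx exprMz_comm //; exact: mulrC.
Qed.

Section TwistedAction.

Variables (gT : finGroupType) (F : {group gT}) (E : comUnitRingType).
Variables (act : gT -> {rmorphism E -> E}) (detE : gT -> E).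
Hypothesis act_id : forall x, act 1%g x = x.
Hypothesis act_mul :
  forall g h x, g \in F -> h \in F -> act (g * h)%g x = act g (act h x).
Hypothesis det_mul :
  forall g h, g \in F -> h \in F -> detE (g * h)%g = detE g * detE h.
Hypothesis det_fix : forall g h, g \in F -> h \in F -> act g (detE h) = detE h.
Hypothesis det_id : detE 1%g = 1.

Local Notation twist := (twisted_act act detE).

Lemma twisted_actMl g x y : twist g (x * y) = act g x * twist g y.
Proof. by rewrite /twisted_act rmorphM mulrA. Qed.

Lemma twisted_act1 x : twist 1%g x = x.
Proof. by rewrite /twisted_act act_id det_id mulr1. Qed.

Lemma twisted_actM g h x :
  g \in F -> h \in F -> twist (g * h)%g x = twist g (twist h x).
Proof.
move=> gF hF; rewrite /twisted_act act_mul // det_mul // rmorphM det_fix //.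
by rewrite -!mulrA [detE h * _]mulrC.
Qed.

Lemma twisted_fixed_group_set u : group_set [set g in F | twist g u == u].
Proof.
apply/group_setP; split; first by rewrite inE group1 twisted_act1 /=.
move=> g h; rewrite !inE => /andP[gF /eqP gu] /andP[hF /eqP hu].
by rewrite groupM // twisted_actM // hu gu /=.
Qed.

Lemma twisted_fixed_gen (S : {set gT}) u :
  F :=: <<S>>%g -> {in S, forall g, twist g u = u} -> {in F, forall g, twist g u = u}.
Proof.
move=> F_gen S_fix g gF.
have /subsetP sFfix : F \subset Group (twisted_fixed_group_set u).
  rewrite {1}F_gen gen_subG; apply/subsetP => s sS.
  by rewrite inE F_gen mem_gen //= S_fix.
by have := sFfix g gF; rewrite inE => /andP[_ /eqP].
Qed.

End TwistedAction.

Lemma tau_twisted_fixed (E : comUnitRingType) p (omega delta : E)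
    (f : {rmorphism E -> E}) :
    prime p -> odd p -> (p ^ mor_n p - 1)%N.-primitive_root omega ->
    delta \is a GRing.unit -> f delta = (mor_eta p omega ^+ p)^-1 * delta ->
  f (delta ^ mor_k p) * mor_eta p omega ^+ ((p ^ mor_n p - 1) %/ mor_n p)%N
    = delta ^ mor_k p.
Proof.
move=> p_prime p_odd omega_prim delta_unit f_delta.
have eta_prim := mor_eta_prim_root p_prime omega_prim.
have eta_unit : mor_eta p omega \is a GRing.unit.
  by rewrite -(unitrX_pos _ (prim_order_gt0 eta_prim)) (prim_expr_order eta_prim) unitr1.
rewrite (rmorph_exprz_eigen _ delta_unit _ f_delta); last by rewrite unitrV unitrX.
rewrite exprz_inv opprK -exprnP mulrAC -exprM -exprD.
have /eqP-> : mor_eta p omega ^+ (p * (mor_n p %/ 2 * (mor_n p - 2))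
                                 + (p ^ mor_n p - 1) %/ mor_n p) == 1.
  by rewrite -(prim_order_dvd eta_prim) mor_n_sqr_dvdn_tau_exponent.
exact: mul1r.
Qed.

Theorem lemma4p16
  (p : nat) (p_prime : prime p) (p_odd : odd p)
  (* E_* as a graded commutative ring *)
  (E : comUnitRingType) (hom : int -> {pred E}) (E_graded : graded_comring hom)
  (* the maximal finite subgroup F = <zeta, tau> = C_p x| C_{n^2} *)
  (gT : finGroupType) (F : {group gT}) (zeta tau : gT) (e : nat)
  (F_gen : F :=: <<[set zeta; tau]>>%g)
  (zeta_order : #[zeta]%g = p) (tau_order : #[tau]%g = (mor_n p ^ 2)%N)
  (e_gen : (mor_n p).-primitive_root (e%:R : 'F_p))
  (tau_conj : (zeta ^ tau)%g = (zeta ^+ e)%g)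
  (* the action of F (restricted from G_n) on E_* *)
  (act : gT -> {rmorphism E -> E}) (act_ok : graded_action F hom act)
  (* the determinant, with values in Z_p^x (inside W, inside E_0) *)
  (detE : gT -> E)
  (det_hom : forall g, g \in F -> detE g \in hom 0)
  (det_mul : forall g h, g \in F -> h \in F -> detE (g * h)%g = detE g * detE h)
  (det_fix : forall g h, g \in F -> h \in F -> act g (detE h) = detE h)
  (* omega primitive (p^n-1)-st root of unity in W, eta = omega^((p^n-1)/n^2) *)
  (omega : E) (omega_hom : omega \in hom 0)
  (omega_prim : (p ^ mor_n p - 1)%N.-primitive_root omega)
  (det_zeta : detE zeta = 1)
  (det_tau : detE tau = mor_eta p omega ^+ ((p ^ mor_n p - 1) %/ mor_n p)%N)
  (* the unit delta in E_{2p} *)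
  (delta : E) (delta_hom : delta \in hom (2 * p)%:Z)
  (delta_unit : delta \is a GRing.unit)
  (delta_inv_hom : delta^-1 \in hom (- (2 * p)%:Z))
  (delta_zeta : act zeta delta = delta)
  (delta_tau : act tau delta = (mor_eta p omega ^+ p)^-1 * delta) :
  let phi := phi_delta delta (mor_k p) in
  (* E_*-linear *)
  (forall a x y, phi (a * x + y) = a * phi x + phi y) /\
  (* graded: Sigma^{2pk} E_* in degree m is E_{m - 2pk} *)
  (forall (m : int) x, x \in hom (m - (2 * p)%:Z * mor_k p) -> phi x \in hom m) /\
  (forall (m : int) y, y \in hom m ->
      exists2 x, x \in hom (m - (2 * p)%:Z * mor_k p) & phi x = y) /\
  (* bijective *)
  bijective phi /\
  (* F-equivariant: phi(g x) = g^(phi x) in E_*<det> *)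
  (forall g x, g \in F -> phi (act g x) = twisted_act act detE g (phi x)).
Proof.
move=> phi.
have zF : zeta \in F by rewrite F_gen mem_gen // !inE eqxx.
have det1 : detE 1%g = 1.
  by rewrite -det_zeta -{1}(mul1g zeta) det_mul ?group1 // det_zeta mulr1.
have delta_k_fixed :
    {in F, forall g, twisted_act act detE g (delta ^ mor_k p) = delta ^ mor_k p}.
  apply: (twisted_fixed_gen (act1 act_ok) (actM act_ok) det_mul det_fix det1 F_gen).
  move=> g; rewrite !inE => /orP[] /eqP ->.
    by rewrite /twisted_act rmorphXz // delta_zeta det_zeta mulr1.
  by rewrite /twisted_act det_tau tau_twisted_fixed.
split; first by move=> a x y; rewrite /phi /phi_delta mulrDl mulrA.
split; first by move=> m x; apply: phi_delta_hom.
split; first by move=> m y; apply: phi_delta_hom_surj.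
split; first exact: phi_delta_bij.
by move=> g x gF; rewrite /phi /phi_delta twisted_actMl delta_k_fixed.
Qed.
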